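(* Let $G=(V,E)$ be an $n$-vertex graph with at least one edge, and define $$\delta_1(G)=\min_{uv\in E}|N(u)\cup N(v)|,\qquad \delta_2(G)=\max_{uv\in E}|N(u)\cup N(v)|.$$ Then $$2\le \frac{3n+2-3\delta_2(G)}{n+1-\delta_2(G)}\le av_1(G)\le \frac{n+4-\delta_1(G)}{2}\le\frac{n+2}{2}.$$
   Context: All graphs are finite and simple. For a graph $G=(V,E)$, a set $S\subseteq V$ is a $1$-nearly independent vertex set if the subgraph induced by $S$ has exactly one edge. $\sigma_1(G)$ is the number of such sets, $S_1(G)$ the sum of their sizes, and $av_1(G)=S_1(G)/\sigma_1(G)$. $N(v)$ is the set of neighbours of $v$. *)

From mathcomp Require Import all_boot all_order all_algebra.
Set Implicit Arguments. Unset Strict Implicit. Unset Printing Implicit Defensive.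
Import Order.TTheory GRing.Theory Num.Theory.

Section Defs.
Variables (T : finType) (e : rel T).

Definition simple_graph : Prop := symmetric e /\ irreflexive e.

Definition nbhd (v : T) : {set T} := [set w | e v w].

Definition induced_edges (S : {set T}) : {set {set T}} :=
  [set [set x; y] | x in S, y in S & e x y].

Definition nearly_indep1 (S : {set T}) : bool := #|induced_edges S| == 1%N.

Definition sigma1 : nat := #|[set S : {set T} | nearly_indep1 S]|.
Definition S1 : nat := \sum_(S : {set T} | nearly_indep1 S) #|S|.

Definition av1 (R : fieldType) : R := (S1%:R) / (sigma1%:R).

Definition union_nb (u v : T) : nat := #|nbhd u :|: nbhd v|.

(* delta_1 = min over edges uv of |N(u) ∪ N(v)|; the default #|T| is an upper
   bound of every term, so it is harmless when at least one edge exists *)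
Definition delta1 : nat :=
  \big[minn/#|T|]_(p : T * T | e p.1 p.2) union_nb p.1 p.2.

Definition delta2 : nat :=
  \max_(p : T * T | e p.1 p.2) union_nb p.1 p.2.

End Defs.

From mathcomp Require Import all_boot all_order all_algebra.
From mathcomp Require Import zify lra.
Import Order.TTheory GRing.Theory Num.Theory.

Set Implicit Arguments.
Unset Strict Implicit.
Unset Printing Implicit Defensive.

(* For a 1-nearly independent set S with edge uv, let I(S) be the vertices of S
   adjacent to nothing in S and A(S) the vertices outside S adjacent to nothing
   in S.  Adding or removing x is a bijection between the sets S with x in A(S)
   and those with x in I(S), so the sums of |I(S)| and of |A(S)| over all such S
   agree.  As I(S), A(S) and N(u) ∪ N(v) are disjoint, |A(S)| + |I(S)| <= n - delta1;
   and if I(S) is empty then S = {u, v} and A(S) contains every vertex outside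
   N(u) ∪ N(v), whence n - delta2 <= |A(S)| + (n - delta2) |I(S)| in all cases.
   Summing over S, with |S| = |I(S)| + 2, bounds av1 = 2 + (sum |I(S)|) / sigma1
   from both sides. *)

Lemma sum_card_exchange (I T : finType) (P : pred I) (A : I -> {set T}) :
  \sum_(i | P i) #|A i| = \sum_x #|[set i | P i & x \in A i]|.
Proof.
under eq_bigr do rewrite -sum1_card big_mkcond.
rewrite exchange_big; apply: eq_bigr => x _.
by rewrite -sum1dep_card big_mkcondr.
Qed.

Section Definitions.
Variables (T : finType) (e : rel T).

Definition nonadj (x : T) (S : {set T}) : bool := [forall y in S, ~~ e x y].
Definition isolated (S : {set T}) : {set T} := [set x in S | nonadj x S].
Definition addable (S : {set T}) : {set T} := [set x in ~: S | nonadj x S].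

Definition total_isolated : nat := \sum_(S | nearly_indep1 e S) #|isolated S|.

End Definitions.

Section NearlyIndependent.
Context {T : finType} {e : rel T}.
Hypotheses (e_sym : symmetric e) (e_irr : irreflexive e).

Lemma nearly_indep1_setU1 [x S] :
  nonadj e x S -> nearly_indep1 e (x |: S) = nearly_indep1 e S.
Proof.
move=> /forall_inP xS; rewrite /nearly_indep1.
congr (_ == 1); apply: eq_card => E.
apply/imset2P/imset2P.
- case=> a b; rewrite !inE => /orP[/eqP->|aS] /andP[/orP[/eqP->|bS] eab] ->.
  + by rewrite e_irr in eab.
  + by rewrite (negbTE (xS _ bS)) in eab.
  + by rewrite e_sym (negbTE (xS _ aS)) in eab.
  + by exists a b => //; rewrite inE bS.
- case=> a b aS; rewrite inE => /andP[bS eab] ->.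
  by exists a b; rewrite ?inE ?aS ?bS ?orbT.
Qed.

Lemma card_isolated_addable_sets x :
  #|[set S | nearly_indep1 e S & x \in isolated e S]| =
  #|[set S | nearly_indep1 e S & x \in addable e S]|.
Proof.
have add_x_inj :
    {in [set S | nearly_indep1 e S & x \in addable e S] &, injective (setU [set x])}.
  move=> S1 S2; rewrite !inE => /and3P[_ xS1 _] /and3P[_ xS2 _] S12.
  by rewrite -(setU1K xS1) -(setU1K xS2) S12.
rewrite -(card_in_imset add_x_inj); apply: eq_card => S.
apply/idP/imsetP.
- rewrite !inE => /and3P[NS xS /forall_inP xS_nonadj].
  have xS'_nonadj : nonadj e x (S :\ x).
    by apply/forall_inP => y /setD1P[_ /xS_nonadj].
  exists (S :\ x); last by rewrite setD1K.
  rewrite !inE eqxx xS'_nonadj /= andbT.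
  by rewrite -(nearly_indep1_setU1 xS'_nonadj) (setD1K xS).
- case=> S'; rewrite !inE => /and3P[NS' xS' xS'_nonadj] ->.
  rewrite (nearly_indep1_setU1 xS'_nonadj) NS' setU11 /=.
  apply/forall_inP => y /setU1P[->|yS']; first by rewrite e_irr.
  exact: (forall_inP xS'_nonadj _ yS').
Qed.

Lemma sum_card_isolated_addable :
  \sum_(S | nearly_indep1 e S) #|isolated e S| =
  \sum_(S | nearly_indep1 e S) #|addable e S|.
Proof.
rewrite sum_card_exchange [RHS]sum_card_exchange; apply: eq_bigr => x _.
exact: card_isolated_addable_sets.
Qed.

Lemma nearly_indep1_unique_edge S : nearly_indep1 e S ->
  exists u v, [/\ u \in S, v \in S, e u v &
    forall x y, x \in S -> y \in S -> e x y -> [set x; y] = [set u; v]].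
Proof.
move=> /cards1P[E SE].
have : E \in induced_edges e S by rewrite SE set11.
case/imset2P=> u v uS; rewrite inE => /andP[vS euv] Euv.
exists u, v; split=> // x y xS yS exy.
have : [set x; y] \in induced_edges e S by apply/imset2P; exists x y; rewrite ?inE ?yS.
by rewrite SE inE -Euv => /eqP.
Qed.

Section EdgeInSet.
Context {S : {set T}} {u v : T}.
Hypotheses (uS : u \in S) (vS : v \in S).

Lemma nonadj_notin_nbhd x : nonadj e x S -> x \notin nbhd e u :|: nbhd e v.
Proof.
move=> /forall_inP x_nonadj; rewrite !inE negb_or (e_sym u) (e_sym v).
by rewrite !x_nonadj.
Qed.

Lemma card_addable_isolated : #|addable e S| + #|isolated e S| + union_nb e u v <= #|T|.
Proof.
set N := nbhd e u :|: nbhd e v.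
have addable_sub : addable e S \subset ~: (isolated e S :|: N).
  apply/subsetP => x /setIdP[xS' /nonadj_notin_nbhd xN].
  rewrite in_setC in_setU negb_or xN andbT; rewrite in_setC in xS'.
  by apply: contra xS' => /setIdP[].
have iso_N : [disjoint isolated e S & N].
  rewrite disjoints_subset; apply/subsetP => x /setIdP[_ /nonadj_notin_nbhd].
  by rewrite in_setC.
have := cardsC (isolated e S :|: N); have := subset_leq_card addable_sub.
rewrite cardsU (disjoint_setI0 iso_N) cards0 /union_nb -/N; lia.
Qed.
End EdgeInSet.

Section UniqueEdge.
Context {S : {set T}} {u v : T}.
Hypotheses (uS : u \in S) (vS : v \in S) (euv : e u v).
Hypothesis edge_uniq :
  forall x y, x \in S -> y \in S -> e x y -> [set x; y] = [set u; v].

Lemma nonisolated_edge x : x \in S -> x \notin isolated e S -> (x == u) || (x == v).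
Proof.
move=> xS; rewrite inE xS /= => /forall_inPn[y yS /negbNE exy].
by rewrite -in_set2 -(edge_uniq xS yS exy) set21.
Qed.

Lemma setD_isolated_edge : S :\: isolated e S = [set u; v].
Proof.
apply/setP => x; rewrite in_setD in_set2; apply/andP/idP => [[] | x_uv].
  by move=> x_iso xS; apply: nonisolated_edge.
have x_nonadj_S : ~~ nonadj e x S.
  apply/forall_inPn; case/orP: x_uv => /eqP->.
  - by exists v; rewrite ?euv.
  - by exists u; rewrite // e_sym euv.
by case/orP: x_uv => /eqP x_eq; rewrite inE negb_and x_nonadj_S orbT x_eq.
Qed.

Lemma card_isolated_edge : #|S| = (#|isolated e S|).+2.
Proof.
have iso_sub : isolated e S \subset S by apply/subsetP => x /setIdP[].
have u_neq_v : u != v by apply: contraTneq euv => ->; rewrite e_irr.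
have := cardsD S (isolated e S).
rewrite setD_isolated_edge cards2 u_neq_v (setIidPr iso_sub).
have := subset_leq_card iso_sub; lia.
Qed.

Lemma isolated0_card_addable :
  isolated e S = set0 -> #|T| <= #|addable e S| + union_nb e u v.
Proof.
move=> iso0; have S_uv : S = [set u; v] by rewrite -setD_isolated_edge iso0 setD0.
have compl_sub : ~: (nbhd e u :|: nbhd e v) \subset addable e S.
  apply/subsetP => y; rewrite !inE negb_or => /andP[uy vy].
  have y_nonadj : nonadj e y S.
    by apply/forall_inP => z; rewrite S_uv !inE => /orP[] /eqP->; rewrite e_sym.
  rewrite y_nonadj andbT S_uv !inE negb_or.
  apply/andP; split; first by apply: contraNneq vy => ->; rewrite e_sym.
  by apply: contraNneq uy => ->.
have := cardsC (nbhd e u :|: nbhd e v); have := subset_leq_card compl_sub.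
rewrite /union_nb; lia.
Qed.
End UniqueEdge.

Lemma union_nb_ge2 [u v] : e u v -> 2 <= union_nb e u v.
Proof.
move=> euv; have u_neq_v : u != v by apply: contraTneq euv => ->; rewrite e_irr.
have := cards2 u v; rewrite u_neq_v => <-; apply: subset_leq_card.
by apply/subsetP => x; rewrite !inE => /orP[] /eqP->; rewrite ?(e_sym v) euv ?orbT.
Qed.

Lemma delta1_le_union [u v] : e u v -> delta1 e <= union_nb e u v.
Proof.
exact: (@bigmin_le_cond _ nat _ #|T| (u, v) _ (fun p => union_nb e p.1 p.2)).
Qed.

Lemma union_le_delta2 [u v] : e u v -> union_nb e u v <= delta2 e.
Proof. by move=> euv; rewrite /delta2 (leq_bigmax_cond (u, v)). Qed.

Lemma delta1_ge2 [u v] : e u v -> 2 <= delta1 e.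
Proof.
move=> euv; apply/(@bigmin_geP _ nat); split=> [|[a b] /union_nb_ge2 //].
by rewrite leEnat (leq_trans (union_nb_ge2 euv) (max_card _)).
Qed.

Lemma delta2_le_card : delta2 e <= #|T|.
Proof. by apply/bigmax_leqP => p _; apply: max_card. Qed.

Lemma nearly_indep1_edge [u v] : e u v -> nearly_indep1 e [set u; v].
Proof.
move=> euv; rewrite /nearly_indep1; apply/cards1P; exists [set u; v].
apply/setP => E; rewrite inE; apply/imset2P/eqP => [|->]; last first.
  by exists u v; rewrite ?inE ?eqxx ?orbT.
case=> a b; rewrite !inE => /orP[] /eqP-> /andP[/orP[] /eqP-> eab] ->;
  by rewrite ?e_irr // in eab; rewrite setUC.
Qed.

Lemma sigma1_gt0 [u v] : e u v -> 0 < sigma1 e.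
Proof.
by move=> euv; apply/card_gt0P; exists [set u; v]; rewrite inE nearly_indep1_edge.
Qed.

Lemma card_nearly_indep1 [S] : nearly_indep1 e S -> #|S| = (#|isolated e S|).+2.
Proof.
case/nearly_indep1_unique_edge=> u [v [uS vS euv uniq]].
exact: card_isolated_edge uS vS euv uniq.
Qed.

Lemma card_addable_isolated_delta1 [S] :
  nearly_indep1 e S -> #|addable e S| + #|isolated e S| + delta1 e <= #|T|.
Proof.
case/nearly_indep1_unique_edge=> u [v [uS vS euv uniq]].
apply: leq_trans _ (card_addable_isolated uS vS).
by rewrite leq_add2l delta1_le_union.
Qed.

Lemma card_addable_isolated_delta2 [S] : nearly_indep1 e S ->
  #|T| - delta2 e <= #|addable e S| + (#|T| - delta2 e) * #|isolated e S|.
Proof.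
case/nearly_indep1_unique_edge=> u [v [uS vS euv uniq]].
have [iso0 | /set0Pn[x x_iso]] := eqVneq (isolated e S) set0.
  rewrite iso0 cards0 muln0 addn0.
  have := isolated0_card_addable uS vS euv uniq iso0.
  have := union_le_delta2 euv; lia.
have iso_gt0 : 0 < #|isolated e S| by apply/card_gt0P; exists x.
by apply: leq_trans (leq_addl _ _); rewrite leq_pmulr.
Qed.

Lemma S1_total_isolated : S1 e = total_isolated e + 2 * sigma1 e.
Proof.
rewrite /S1 /total_isolated /sigma1 -sum1dep_card big_distrr -big_split /=.
by apply: eq_bigr => S /card_nearly_indep1 ->; rewrite muln1 addn2.
Qed.

Lemma total_isolated_upper : (total_isolated e).*2 <= sigma1 e * (#|T| - delta1 e).
Proof.
rewrite -addnn {2}/total_isolated sum_card_isolated_addable -big_split /=.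
rewrite /sigma1 -sum1dep_card big_distrl /=; apply: leq_sum => S NS.
rewrite mul1n; have := card_addable_isolated_delta1 NS; set N := #|T|; lia.
Qed.

Lemma total_isolated_lower :
  sigma1 e * (#|T| - delta2 e) <= (#|T| - delta2 e).+1 * total_isolated e.
Proof.
rewrite mulSn {1}/total_isolated sum_card_isolated_addable big_distrr -big_split /=.
rewrite /sigma1 -sum1dep_card big_distrl /=; apply: leq_sum => S NS.
by rewrite mul1n card_addable_isolated_delta2.
Qed.

End NearlyIndependent.

Local Open Scope ring_scope.

Lemma ratio_bounds (R : realFieldType) (n d1 d2 s i : R) :
  0 < s -> d2 <= n -> 2 <= d1 -> d1 <= n ->
  i + i <= s * (n - d1) -> s * (n - d2) <= (n - d2 + 1) * i ->
  [/\ 2 <= (3 * n + 2 - 3 * d2) / (n + 1 - d2),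
      (3 * n + 2 - 3 * d2) / (n + 1 - d2) <= (i + 2 * s) / s,
      (i + 2 * s) / s <= (n + 4 - d1) / 2
    & (n + 4 - d1) / 2 <= (n + 2) / 2].
Proof.
move=> s_gt0 d2n d1_ge2 d1n upper lower.
have den_gt0 : 0 < n + 1 - d2 by lra.
split.
- by rewrite ler_pdivlMr //; lra.
- by rewrite ler_pdivrMr // mulrAC ler_pdivlMr //; nra.
- by rewrite ler_pdivrMr // mulrAC ler_pdivlMr //; nra.
- by rewrite ler_pM2r ?invr_gt0 ?ltr0n //; lra.
Qed.

Theorem mainTheorem8 (R : realFieldType) (T : finType) (e : rel T) :
  simple_graph e ->
  (exists u v : T, e u v) ->
  let n : R := (#|T|)%:R in
  let d1 : R := (delta1 e)%:R in
  let d2 : R := (delta2 e)%:R in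
  [/\ 2 <= (3 * n + 2 - 3 * d2) / (n + 1 - d2),
      (3 * n + 2 - 3 * d2) / (n + 1 - d2) <= av1 e R,
      av1 e R <= (n + 4 - d1) / 2
    & (n + 4 - d1) / 2 <= (n + 2) / 2].
Proof.
case=> e_sym e_irr [u [v euv]] n d1 d2.
have d1_le_n := leq_trans (delta1_le_union euv) (max_card _).
have d2_le_n := @delta2_le_card _ e.
rewrite /av1 (S1_total_isolated e_sym e_irr) natrD natrM.
apply: ratio_bounds.
- by rewrite ltr0n (sigma1_gt0 e_irr euv).
- by rewrite ler_nat.
- by rewrite (ler_nat R 2) (delta1_ge2 e_sym e_irr euv).
- by rewrite ler_nat.
- have := total_isolated_upper e_sym e_irr.
  by rewrite -addnn -(ler_nat R) natrD natrM natrB.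
- have := total_isolated_lower e_sym e_irr.
  by rewrite -(ler_nat R) -addn1 !natrM natrD natrB.
Qed.
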